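(* Let $S\subseteq\mathcal S_d$ be nonempty, $[d]$ partitioned into groups $G_1,\dots,G_g$, $\bar\alpha,\bar\beta\in[0,1]^g$, $k\in[d]$, and $\alpha\ge 1$. Let $\mathcal{F}\subseteq\mathcal S_d$ be the (nonempty) set of $(\bar\alpha,\bar\beta)$-$k$-fair rankings. If $\tilde\pi\in\mathcal F$ satisfies $\sum_{\pi\in S}F(\pi,\tilde\pi)\le\alpha\min_{\sigma\in\mathcal F}\sum_{\pi\in S}F(\pi,\sigma)$, then $\sum_{\pi\in S}\kappa(\pi,\tilde\pi)\le 2\alpha\min_{\sigma\in\mathcal F}\sum_{\pi\in S}\kappa(\pi,\sigma)$.
   Context: $\mathcal{S}_d$ is the set of rankings of $[d]$, $\pi(a)$ the rank of $a$. A ranking is $(\bar\alpha,\bar\beta)$-$k$-fair if for every $i\in[g]$ its top $k$ positions contain at least $\lfloor\alpha_i k\rfloor$ and at most $\lceil\beta_i k\rceil$ members of $G_i$. $F(\pi,\sigma)=\sum_{i\in[d]}|\pi(i)-\sigma(i)|$ is the Spearman footrule distance; $\kappa(\pi,\sigma)$ is the Kendall-tau distance, the number of unordered pairs $\{a,b\}\subseteq[d]$ ordered differently by $\pi$ and $\sigma$. *)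

From HB Require Import structures.
From mathcomp Require Import all_boot all_order all_algebra all_fingroup.
From mathcomp Require Import reals.
Set Implicit Arguments. Unset Strict Implicit. Unset Printing Implicit Defensive.
Import Order.TTheory GRing.Theory Num.Theory.
Local Open Scope ring_scope.

(* A ranking of [d] is a permutation pi : 'S_d; pi a is the (0-indexed)
   rank/position of item a. Top-k positions are those with pi a < k. *)

Definition top_count (d g : nat) (grp : 'I_d -> 'I_g) (i : 'I_g) (k : nat)
  (pi : 'S_d) : nat :=
  #|[set a : 'I_d | (grp a == i) && (pi a < k)%N]|.

Definition k_fair (R : realType) (d g : nat) (grp : 'I_d -> 'I_g)
  (al be : 'I_g -> R) (k : nat) (pi : 'S_d) : Prop :=
  forall i : 'I_g,
    (Num.floor (al i * k%:R) <= (top_count grp i k pi)%:Z)%R /\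
    ((top_count grp i k pi)%:Z <= Num.ceil (be i * k%:R))%R.

Definition footrule (d : nat) (pi sigma : 'S_d) : nat :=
  (\sum_(a : 'I_d) absz ((pi a : nat)%:Z - (sigma a : nat)%:Z))%N.

Definition kendall (d : nat) (pi sigma : 'S_d) : nat :=
  #|[set p : 'I_d * 'I_d | (p.1 < p.2)%N &&
      ((pi p.1 < pi p.2)%N != (sigma p.1 < sigma p.2)%N)]|.

Definition cost_F (d : nat) (S : {set 'S_d}) (sigma : 'S_d) : nat :=
  (\sum_(pi in S) footrule pi sigma)%N.

Definition cost_K (d : nat) (S : {set 'S_d}) (sigma : 'S_d) : nat :=
  (\sum_(pi in S) kendall pi sigma)%N.

From HB Require Import structures.
From mathcomp Require Import all_boot all_order all_algebra all_fingroup.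
From mathcomp Require Import reals.
From mathcomp Require Import zify.

(* Diaconis-Graham: for any two rankings, Kendall <= footrule <= 2 * Kendall,
   so the costs over S compare the same way and an alpha-approximation for
   the footrule cost is a 2 alpha-approximation for the Kendall cost.
   The upper bound holds item by item: the displacement of a is at most the
   number of inversions involving a.  The lower bound is by induction on the
   footrule: if pi <> sigma, some b is ranked strictly earlier by pi, and for
   the one with least sigma-rank a counting argument yields a with
   pi b <= sigma a < sigma b <= pi a.  Swapping a and b in pi lowers the
   footrule by 2 (sigma b - sigma a) and the Kendall distance by at most as
   much, since after relabelling this is the swap of the sigma-positions
   sigma a < sigma b, which creates at most 2 (sigma b - sigma a) inversions. *)

Lemma sum_ord_range k m n :
  \sum_(i < k) ((m <= i) && (i < n) : nat) = minn k n - minn k m.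
Proof.
elim: k => [|k IHk]; first by rewrite big_ord0; lia.
by rewrite big_ord_recr /= IHk; case: (leqP m k); case: (ltnP k n) => /=; lia.
Qed.

Lemma sum_pred1_mul {T : finType} (F : T -> nat) (a : T) : \sum_x (x == a) * F x = F a.
Proof. by rewrite (bigD1 a) //= eqxx mul1n big1 ?addn0 // => x /negbTE ->. Qed.

Section Rankings.
Variable d : nat.
Implicit Types (pi sigma rho : 'S_d) (a b c x y : 'I_d).

Lemma perm_val_inj pi : injective (fun x => pi x : nat).
Proof. by move=> x y /val_inj/perm_inj. Qed.

Lemma sum_perm_range pi m n : n <= d ->
  \sum_c ((m <= pi c) && (pi c < n) : nat) = n - m.
Proof.
move=> le_nd; rewrite (reindex_inj (h := pi^-1%g) (@perm_inj _ _)) /=.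
under eq_bigr do rewrite permKV.
by rewrite sum_ord_range; lia.
Qed.

Definition inversions pi sigma : nat :=
  \sum_x \sum_y ((sigma x < sigma y) && (pi y < pi x) : nat).

Lemma inversionsC pi sigma : inversions sigma pi = inversions pi sigma.
Proof.
by rewrite /inversions exchange_big; apply: eq_bigr => x _; apply: eq_bigr => y _; rewrite andbC.
Qed.

Definition discordant pi sigma x y : bool := (pi x < pi y) != (sigma x < sigma y).

Lemma discordantC pi sigma x y : discordant pi sigma x y = discordant pi sigma y x.
Proof.
rewrite /discordant; case: (eqVneq x y) => [->//|neq_xy].
have := inj_eq (perm_val_inj pi) x y; have := inj_eq (perm_val_inj sigma) x y.
by rewrite (negbTE neq_xy); case: (ltngtP (sigma x) (sigma y)); case: (ltngtP (pi x) (pi y)).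
Qed.

Lemma discordantE pi sigma x y :
  discordant pi sigma x y
  = ((sigma x < sigma y) && (pi y < pi x)) + ((sigma y < sigma x) && (pi x < pi y)) :> nat.
Proof.
rewrite /discordant; case: (eqVneq x y) => [->|neq_xy]; first by rewrite !ltnn.
have := inj_eq (perm_val_inj pi) x y; have := inj_eq (perm_val_inj sigma) x y.
by rewrite (negbTE neq_xy); case: (ltngtP (sigma x) (sigma y)); case: (ltngtP (pi x) (pi y)).
Qed.

Lemma kendall_sum pi sigma :
  kendall pi sigma = \sum_(x : 'I_d) \sum_(y : 'I_d) ((x < y) && discordant pi sigma x y).
Proof.
rewrite /kendall -sum1dep_card big_mkcond [RHS]pair_bigA /=.
by apply: eq_bigr => p _; case: ifP.
Qed.

Lemma sum_discordant_kendall pi sigma :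
  \sum_x \sum_y (discordant pi sigma x y : nat) = 2 * kendall pi sigma.
Proof.
have split_order x y : (discordant pi sigma x y : nat)
    = ((x < y) && discordant pi sigma x y) + ((y < x) && discordant pi sigma y x).
  rewrite [discordant _ _ y x]discordantC.
  case: (ltngtP x y) => [_|_|/val_inj ->]; rewrite ?addn0 //.
  by rewrite /discordant !ltnn.
under eq_bigr do under eq_bigr do rewrite split_order.
under eq_bigr do rewrite big_split /=.
by rewrite big_split /= [X in _ + X]exchange_big -kendall_sum addnn mul2n.
Qed.

Lemma sum_discordant_inversions pi sigma :
  \sum_x \sum_y (discordant pi sigma x y : nat) = 2 * inversions pi sigma.
Proof.
under eq_bigr do under eq_bigr do rewrite discordantE.
under eq_bigr do rewrite big_split /=.
by rewrite big_split /= [X in _ + X]exchange_big addnn mul2n.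
Qed.

Lemma kendall_inversions pi sigma : kendall pi sigma = inversions pi sigma.
Proof.
apply/eqP; rewrite -(eqn_pmul2l (isT : 0 < 2)).
by rewrite -sum_discordant_kendall sum_discordant_inversions.
Qed.

Lemma inversions_triangle pi rho sigma :
  inversions pi sigma <= inversions pi rho + inversions rho sigma.
Proof.
rewrite /inversions -big_split; apply: leq_sum => x _.
rewrite -big_split; apply: leq_sum => y _ /=.
case: (eqVneq x y) => [->|neq_xy]; first by rewrite ltnn.
have := inj_eq (perm_val_inj rho) x y; rewrite (negbTE neq_xy).
by case: (ltngtP (rho x) (rho y)) => //= _ _;
  case: (sigma x < sigma y); case: (pi y < pi x).
Qed.

Lemma inversions_mulg rho pi sigma :
  inversions (rho * pi) (rho * sigma) = inversions pi sigma.
Proof.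
rewrite /inversions [RHS](reindex_inj (@perm_inj _ rho)); apply: eq_bigr => x _.
by rewrite [RHS](reindex_inj (@perm_inj _ rho)); apply: eq_bigr => y _; rewrite !permM.
Qed.

Lemma inversions_tperm {sigma : 'S_d} {a b : 'I_d} : sigma a < sigma b ->
  inversions (tperm a b * sigma) sigma <= 2 * (sigma b - sigma a).
Proof.
move=> lt_ab.
have bound x y :
  ((sigma x < sigma y) && (sigma (tperm a b y) < sigma (tperm a b x)) : nat)
   <= (x == a) * (sigma a < sigma y < (sigma b).+1)
    + (y == b) * (sigma a <= sigma x < sigma b).
  by case: tpermP => [->|->|? ?]; case: tpermP => [->|->|? ?]; rewrite ?eqxx; lia.
rewrite /inversions; under eq_bigr do under eq_bigr do rewrite !permM.
apply: leq_trans (leq_sum _ (fun x _ => leq_sum _ (fun y _ => bound x y))) _.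
under eq_bigr do rewrite big_split /= -big_distrr /= (sum_pred1_mul (fun=> _)).
rewrite big_split /= (sum_pred1_mul (fun=> _)) !sum_perm_range ?(ltnW (ltn_ord _)) //.
by rewrite subSS mul2n addnn.
Qed.

Lemma rank_decomposition pi sigma a :
  pi a = \sum_c ((pi c < pi a) && (sigma c < sigma a)) +
         \sum_c ((sigma a < sigma c) && (pi c < pi a)) :> nat.
Proof.
rewrite -[LHS]subn0 -(sum_perm_range pi 0 _ (ltnW (ltn_ord (pi a)))) -big_split /=.
apply: eq_bigr => c _; case: (eqVneq c a) => [->|neq_ca]; first by rewrite !ltnn.
have := inj_eq (perm_val_inj sigma) c a; rewrite (negbTE neq_ca).
by case: (ltngtP (sigma c) (sigma a)); case: (pi c < pi a).
Qed.

Lemma footrule_le_double_inversions pi sigma :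
  footrule pi sigma <= 2 * inversions pi sigma.
Proof.
have dist_le a : absz ((pi a : nat)%:Z - (sigma a : nat)%:Z)%R <=
    \sum_c ((sigma a < sigma c) && (pi c < pi a))
  + \sum_c ((pi a < pi c) && (sigma c < sigma a)).
  have := rank_decomposition pi sigma a; have := rank_decomposition sigma pi a.
  under [X in _ = X + _ -> _]eq_bigr do rewrite andbC.
  lia.
rewrite /footrule; apply: leq_trans (leq_sum _ (fun a _ => dist_le a)) _.
by rewrite big_split /= -[X in _ + X]inversionsC addnn mul2n.
Qed.

Lemma footruleC pi sigma : footrule sigma pi = footrule pi sigma.
Proof. by apply: eq_bigr => a _; lia. Qed.

(* The space in [{ pi] avoids the [{pi a}] token of generic_quotient. *)
Lemma footrule_tperm { pi sigma : 'S_d} {a b : 'I_d} :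
  pi b <= sigma a -> sigma a < sigma b -> sigma b <= pi a ->
  footrule pi sigma = footrule (tperm a b * pi) sigma + 2 * (sigma b - sigma a).
Proof.
move=> le_pb_sa lt_sa_sb le_sb_pa.
have neq_ab : a != b by apply: contraTneq lt_sa_sb => ->; rewrite ltnn.
rewrite /footrule (bigD1 a) // (bigD1 b) 1?eq_sym //=.
rewrite [X in _ = X + _](bigD1 a) // [X in _ = _ + X + _](bigD1 b) 1?eq_sym //=.
under [X in _ = _ + (_ + X) + _]eq_bigr => x /andP [neq_xa neq_xb] do
  rewrite permM tpermD // 1?eq_sym //.
rewrite !permM tpermL tpermR; lia.
Qed.

Lemma exists_crossing { pi sigma : 'S_d} {b : 'I_d} : pi b < sigma b ->
  (forall e, pi e < sigma e -> sigma b <= sigma e) ->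
  exists a, [&& pi b <= sigma a, sigma a < sigma b & sigma b <= pi a].
Proof.
move=> lt_b min_b; apply/existsP/contraT => /existsPn no_crossing.
have : \sum_e ((pi b <= sigma e) && (sigma e < sigma b))
       <= \sum_e ((pi b).+1 <= pi e) && (pi e < sigma b).
  apply: leq_sum => e _; have := no_crossing e; have := min_b e.
  have := inj_eq (perm_val_inj pi) e b; have := inj_eq (perm_val_inj sigma) e b.
  case: (eqVneq e b) => [->|_]; lia.
rewrite !sum_perm_range ?(ltnW (ltn_ord _)) //; lia.
Qed.

Lemma footrule_descent { pi sigma : 'S_d} {e : 'I_d} : pi e < sigma e ->
  exists2 pi', footrule pi' sigma < footrule pi sigma &
    inversions pi sigma + footrule pi' sigma <= inversions pi' sigma + footrule pi sigma.
Proof.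
move=> lt_e; case: (@arg_minnP _ e (fun b => pi b < sigma b) (fun b => sigma b : nat) lt_e).
move=> b lt_b min_b.
have [a /and3P [le_pb_sa lt_sa_sb le_sb_pa]] := exists_crossing lt_b min_b.
exists (tperm a b * pi)%g; rewrite (footrule_tperm le_pb_sa lt_sa_sb le_sb_pa).
  lia.
have -> : inversions (tperm a b * pi) sigma = inversions pi (tperm a b * sigma).
  by rewrite -[in RHS](tpermKg a b pi) inversions_mulg.
apply: leq_trans (leq_add (inversions_triangle _ (tperm a b * sigma) _) (leqnn _)) _.
by rewrite -addnA leq_add2l addnC leq_add2l (inversions_tperm lt_sa_sb).
Qed.

Lemma inversions_le_footrule pi sigma : inversions pi sigma <= footrule pi sigma.
Proof.
have [n] := ubnP (footrule pi sigma); elim: n pi sigma => // n IHn pi sigma lt_F_n.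
case: (boolP [exists e, (pi e : nat) != sigma e]) => [/existsP [e neq_e]|/existsPn eq_ps].
  wlog lt_e : pi sigma lt_F_n neq_e / pi e < sigma e.
    move=> gen; case: (ltngtP (pi e) (sigma e)) => [lt_e|gt_e|eq_e].
    - exact: gen lt_F_n neq_e lt_e.
    - rewrite -inversionsC -footruleC; apply: gen gt_e; first by rewrite footruleC.
      by rewrite eq_sym.
    - by rewrite eq_e eqxx in neq_e.
  have [pi' lt_F le_inv] := footrule_descent lt_e.
  have IH_pi' := IHn pi' sigma (leq_trans lt_F (ltnSE lt_F_n)).
  by rewrite -(leq_add2r (footrule pi' sigma)) (leq_trans le_inv) // addnC leq_add2l.
have -> : pi = sigma by apply/permP => x; apply/val_inj/eqP/negPn/eq_ps.
by rewrite /inversions big1 // => x _; rewrite big1 // => y _; case: ltngtP.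
Qed.

Lemma kendall_le_footrule pi sigma : kendall pi sigma <= footrule pi sigma.
Proof. by rewrite kendall_inversions inversions_le_footrule. Qed.

Lemma footrule_le_double_kendall pi sigma : footrule pi sigma <= 2 * kendall pi sigma.
Proof. by rewrite kendall_inversions footrule_le_double_inversions. Qed.

End Rankings.

Lemma cost_K_le_cost_F d (S : {set 'S_d}) (sigma : 'S_d) : cost_K S sigma <= cost_F S sigma.
Proof. by apply: leq_sum => pi _; exact: kendall_le_footrule. Qed.

Lemma cost_F_le_double_cost_K d (S : {set 'S_d}) (sigma : 'S_d) :
  cost_F S sigma <= 2 * cost_K S sigma.
Proof.
by rewrite /cost_K big_distrr; apply: leq_sum => pi _; exact: footrule_le_double_kendall.
Qed.

Import Order.TTheory GRing.Theory Num.Theory.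
Local Open Scope ring_scope.

Theorem theoremA2 (R : realType) (d g : nat) (S : {set 'S_d})
  (grp : 'I_d -> 'I_g) (al be : 'I_g -> R) (k : nat) (alpha : R)
  (pit : 'S_d) :
  S != set0 ->
  (forall i, 0 <= al i <= 1) ->
  (forall i, 0 <= be i <= 1) ->
  (1 <= k <= d)%N ->
  1 <= alpha ->
  (exists sigma : 'S_d, k_fair grp al be k sigma) ->
  k_fair grp al be k pit ->
  (forall sigma : 'S_d, k_fair grp al be k sigma ->
     (cost_F S pit)%:R <= alpha * (cost_F S sigma)%:R) ->
  forall sigma : 'S_d, k_fair grp al be k sigma ->
     (cost_K S pit)%:R <= 2 * alpha * (cost_K S sigma)%:R.
Proof.
move=> _ _ _ _ ge1_alpha _ _ pit_approx sigma fair_sigma.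
have ge0_alpha : 0 <= alpha := le_trans ler01 ge1_alpha.
apply: (@le_trans _ _ (cost_F S pit)%:R); first by rewrite ler_nat cost_K_le_cost_F.
apply: le_trans (pit_approx sigma fair_sigma) _.
by rewrite -mulrA mulrCA ler_wpM2l // -natrM ler_nat cost_F_le_double_cost_K.
Qed.
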